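(* For every integer $t\ge 0$, the two-dimensional continued fractions associated to the operators $$A_t=\begin{pmatrix}0&1&0\\0&0&1\\1&1+t&-t-2\end{pmatrix}\quad\text{and}\quad M_t=\begin{pmatrix}0&0&1\\1&0&-t-5\\0&1&t+6\end{pmatrix}$$ are equivalent.
   Context: Let $n\ge1$. Given $n+1$ hyperplanes through the origin of $\mathbb R^{n+1}$ in general position, their complement consists of $2^{n+1}$ open orthants. For each orthant, the sail is the boundary of the convex hull of all integer points, other than the origin, lying in the closure of that orthant; the union of all $2^{n+1}$ sails is the $n$-dimensional continued fraction associated to these hyperplanes. If $A\in GL(n+1,\mathbb Z)$ has characteristic polynomial irreducible over $\mathbb Q$ with all roots real and distinct, the $n+1$ hyperplanes spanned by the subsets of $n$ of its $n+1$ linearly independent eigenvectors are in general position, and the continued fraction they define is called the continued fraction associated to $A$. Two continued fractions are equivalent if there is a linear transformation of $\mathbb R^{n+1}$ preserving the integer lattice $\mathbb Z^{n+1}$ that maps one onto the other. (Here $n=2$; for every $t\ge0$ both matrices have characteristic polynomial irreducible over $\mathbb Q$ with three distinct real roots, so the associated continued fractions are defined.) *)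

From HB Require Import structures.
From mathcomp Require Import all_boot all_order all_algebra.
From mathcomp Require Import all_classical all_reals all_analysis.
Set Implicit Arguments. Unset Strict Implicit. Unset Printing Implicit Defensive.
Import Order.TTheory GRing.Theory Num.Theory.
Import numFieldNormedType.Exports.
Local Open Scope classical_set_scope.
Local Open Scope ring_scope.

Definition int_pts (R : realType) : set 'cV[R]_3 :=
  [set x | exists z : 'cV[int]_3, x = map_mx (fun a : int => a%:~R) z].

Arguments int_pts R : clear implicits.

Definition conv_hull (R : realType) (S : set 'cV[R]_3) : set 'cV[R]_3 :=
  [set x | exists (n : nat) (p : 'I_n -> 'cV[R]_3) (w : 'I_n -> R),
     (forall i, S (p i)) /\ (forall i, 0 <= w i) /\ \sum_i w i = 1 /\
     x = \sum_i w i *: p i].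

Definition bdry (R : realType) (S : set 'cV[R]_3) : set 'cV[R]_3 :=
  closure S `\` interior S.

(* v : three linearly independent vectors; the three hyperplanes are the
   spans of pairs {v j, v k}.  The closed orthant with sign pattern s
   (s i = true means "+") is the closure of the corresponding open orthant. *)
Definition closed_orthant (R : realType) (v : 'I_3 -> 'cV[R]_3)
  (s : 'I_3 -> bool) : set 'cV[R]_3 :=
  [set x | exists c : 'I_3 -> R,
     (forall i, 0 <= (if s i then c i else - c i)) /\ x = \sum_i c i *: v i].

Definition sail (R : realType) (v : 'I_3 -> 'cV[R]_3) (s : 'I_3 -> bool)
  : set 'cV[R]_3 :=
  bdry (conv_hull ((closed_orthant v s `&` int_pts R) `\` [set 0])).

Definition cont_frac (R : realType) (v : 'I_3 -> 'cV[R]_3) : set 'cV[R]_3 :=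
  [set x | exists s : 'I_3 -> bool, sail v s x].

(* v i is an eigenvector of A with eigenvalue l i, eigenvalues pairwise
   distinct (hence the v i are linearly independent) *)
Definition eigenbasis (R : realType) (A : 'M[R]_3) (v : 'I_3 -> 'cV[R]_3)
  (l : 'I_3 -> R) : Prop :=
  (forall i, v i != 0 /\ A *m v i = l i *: v i) /\ injective l.

Definition cf_equiv (R : realType) (S1 S2 : set 'cV[R]_3) : Prop :=
  exists L : 'M[R]_3,
    (fun x => L *m x) @` int_pts R = int_pts R /\ (fun x => L *m x) @` S1 = S2.

Definition mx3 (R : realType) (e : seq (seq R)) : 'M[R]_3 :=
  \matrix_(i < 3, j < 3) nth 0 (nth [::] e i) j.

Definition A_t (R : realType) (t : nat) : 'M[R]_3 :=
  mx3 [:: [:: 0; 1; 0]; [:: 0; 0; 1]; [:: 1; 1 + t%:R; - t%:R - 2]].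

Definition M_t (R : realType) (t : nat) : 'M[R]_3 :=
  mx3 [:: [:: 0; 0; 1]; [:: 1; 0; - t%:R - 5]; [:: 0; 1; t%:R + 6]].

Arguments A_t R t : clear implicits.
Arguments M_t R t : clear implicits.

From HB Require Import structures.
From mathcomp Require Import all_boot all_order all_algebra.
From mathcomp Require Import all_classical all_reals all_analysis.
From mathcomp Require Import perm ring lra.
Import Order.TTheory GRing.Theory Num.Theory.
Import numFieldNormedType.Exports.
Set Implicit Arguments. Unset Strict Implicit. Unset Printing Implicit Defensive.
Local Open Scope classical_set_scope.
Local Open Scope ring_scope.

(* The integer matrix L_t is unimodular and satisfies
   M_t L_t = L_t (A_t^2 + (t+3) A_t + 2), so it sends an eigenvector of A_t with
   eigenvalue l to an eigenvector of M_t with eigenvalue l^2 + (t+3) l + 2.  As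
   M_t has three simple eigenvalues, L_t maps each eigenline of A_t onto an
   eigenline of M_t.  A lattice-preserving linear bijection permuting the
   eigenlines permutes the closed orthants (up to signs), fixes Z^3 and the
   origin, and commutes with convex hulls and topological boundaries; hence it
   maps the sails of A_t bijectively onto the sails of M_t. *)

Lemma continuous_sum (R : numFieldType) (T : topologicalType) (V : normedModType R)
    (I : Type) (r : seq I) (F : I -> T -> V) :
  (forall i, continuous (F i)) -> continuous (fun x => \sum_(i <- r) F i x).
Proof.
move=> FC; elim: r => [|i r IHr].
  rewrite (_ : (fun _ => _) = cst 0); last by apply/funext => x; rewrite big_nil.
  exact: cst_continuous.
rewrite (_ : (fun _ => _) = F i + fun x => \sum_(j <- r) F j x).
  by move=> x; apply: continuousD; [exact: FC | exact: IHr].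
by apply/funext => x; rewrite big_cons.
Qed.

Lemma mulmx_continuous (R : numFieldType) m n (L : 'M[R]_(m, n)) :
  continuous (mulmx L : 'cV[R]_n -> 'cV[R]_m).
Proof.
have -> : mulmx L = (fun x : 'cV[R]_n => \sum_k x k 0 *: col k L).
  apply/funext => x; apply/matrixP => i j.
  rewrite !mxE summxE; apply: eq_bigr => k _.
  by rewrite !mxE (ord1 j) mulrC.
by apply: continuous_sum => k x; apply: continuousZr_tmp; apply: coord_continuous.
Qed.

Lemma preimage_interior_sub (T U : topologicalType) (h : T -> U) (S : set U) :
  continuous h -> h @^-1` interior S `<=` interior (h @^-1` S).
Proof. by move=> hC x; apply: hC. Qed.

Section Homeomorphism.
Variables (T U : topologicalType) (f : T -> U) (g : U -> T).
Hypotheses (fC : continuous f) (gC : continuous g) (fK : cancel f g) (gK : cancel g f).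

Lemma interior_preimage S : interior (f @^-1` S) = f @^-1` interior S.
Proof.
apply/seteqP; split; last exact: preimage_interior_sub.
move=> x /= fSx; rewrite -[S](_ : g @^-1` (f @^-1` S) = S); last first.
  by apply/funext => y /=; rewrite gK.
by apply: preimage_interior_sub; rewrite //= fK.
Qed.

Lemma closure_preimage S : closure (f @^-1` S) = f @^-1` closure S.
Proof.
rewrite -[closure _]setCK -interiorC -[closure S]setCK -interiorC.
by rewrite -[~` (f @^-1` S)]/(f @^-1` ~` S) interior_preimage.
Qed.

End Homeomorphism.

Lemma image_can_preimage (T U : Type) (f : T -> U) (g : U -> T) (X : set T) :
  cancel f g -> cancel g f -> f @` X = g @^-1` X.
Proof.
move=> fK gK; apply/seteqP; split; first by move=> _ [x Xx <-] /=; rewrite fK.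
by move=> y Xgy; exists (g y); rewrite ?gK.
Qed.

Section LinearBijection.
Variables (R : realType) (A B : 'M[R]_3).
Hypotheses (AK : cancel (mulmx A : 'cV[R]_3 -> _) (mulmx B))
  (BK : cancel (mulmx B : 'cV[R]_3 -> _) (mulmx A)).

Lemma bdry_preimage S : bdry (mulmx B @^-1` S) = mulmx B @^-1` bdry S.
Proof.
have [AC BC] := (@mulmx_continuous R 3 3 A, @mulmx_continuous R 3 3 B).
by rewrite /bdry (closure_preimage BC AC BK AK) (interior_preimage BC AC BK AK).
Qed.

Lemma conv_hull_preimage S : conv_hull (mulmx B @^-1` S) = mulmx B @^-1` conv_hull S.
Proof.
apply/seteqP; split=> x [n [p [c [Sp [c_ge0 [c_sum1 xE]]]]]].
  exists n, (fun i => B *m p i), c; do !split => //.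
  by rewrite /= xE mulmx_sumr; apply: eq_bigr => i _; rewrite scalemxAr.
exists n, (fun i => A *m p i), c; split; first by move=> i /=; rewrite AK.
do !split => //.
by rewrite -[x]BK xE mulmx_sumr; apply: eq_bigr => i _; rewrite scalemxAr.
Qed.

End LinearBijection.

Lemma preimage_int_pts (R : realType) (L L' : 'M[int]_3) : L *m L' = 1 ->
  mulmx (map_mx intr L') @^-1` int_pts R = int_pts R.
Proof.
move=> LL'; apply/seteqP; split=> [y [z yE] | y [z ->]]; last first.
  by exists (L' *m z); rewrite /= map_mxM.
by exists (L *m z); rewrite map_mxM -yE mulmxA -map_mxM LL' map_mx1 mul1mx.
Qed.

Lemma intmx_mulmxK (R : realType) (L L' : 'M[int]_3) : L' *m L = 1 ->
  cancel (mulmx (map_mx intr L : 'M[R]_3) : 'cV[R]_3 -> _) (mulmx (map_mx intr L')).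
Proof. by move=> L'L x; rewrite mulmxA -map_mxM L'L map_mx1 mul1mx. Qed.

Lemma signed_coord_mul_ge0 (R : realDomainType) (a c : R) (s : bool) : c != 0 ->
  (0 <= if s (+) (c < 0) then a * c else - (a * c)) = (0 <= if s then a else - a).
Proof.
move=> c0; have [cN|cP] := ltrP c 0; last first.
  have {}cP : 0 < c by rewrite lt_neqAle eq_sym c0.
  by case: s => /=; apply/idP/idP; nra.
by case: s => /=; apply/idP/idP; nra.
Qed.

Section EigenlineTransfer.
Variables (R : realType) (L L' : 'M[int]_3).
Hypotheses (LL' : L *m L' = 1) (L'L : L' *m L = 1).
Variables (v w : 'I_3 -> 'cV[R]_3) (sg : {perm 'I_3}) (c : 'I_3 -> R).
Hypotheses (c_neq0 : forall i, c i != 0)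
  (Lv : forall i, map_mx intr L *m v i = c i *: w (sg i)).

Local Notation f := (mulmx (map_mx intr L) : 'cV[R]_3 -> 'cV[R]_3).
Local Notation g := (mulmx (map_mx intr L') : 'cV[R]_3 -> 'cV[R]_3).

Let fK : cancel f g := intmx_mulmxK L'L.
Let gK : cancel g f := intmx_mulmxK LL'.

Lemma mulmx_sum_eigenline (a : 'I_3 -> R) :
  f (\sum_i a i *: v i) = \sum_j (a ((sg^-1)%g j) * c ((sg^-1)%g j)) *: w j.
Proof.
rewrite mulmx_sumr [RHS](reindex_inj (@perm_inj _ sg)) /=.
by apply: eq_bigr => i _; rewrite permK -scalemxAr Lv scalerA.
Qed.

Definition orthant_sign (s : 'I_3 -> bool) (j : 'I_3) : bool :=
  s ((sg^-1)%g j) (+) (c ((sg^-1)%g j) < 0).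

Lemma orthant_sign_surj s' : exists s, orthant_sign s = s'.
Proof.
exists (fun i => s' (sg i) (+) (c i < 0)).
by apply/funext => j; rewrite /orthant_sign permKV addbK.
Qed.

Lemma preimage_closed_orthant s :
  g @^-1` closed_orthant v s = closed_orthant w (orthant_sign s).
Proof.
apply/seteqP; split=> y [a [a_sign yE]].
  exists (fun j => a ((sg^-1)%g j) * c ((sg^-1)%g j)); split.
    by move=> j; rewrite signed_coord_mul_ge0.
  by rewrite -[y]gK /= yE mulmx_sum_eigenline.
exists (fun i => a (sg i) / c i); split.
  move=> i; rewrite -(signed_coord_mul_ge0 _ _ (c_neq0 i)) divfK //.
  by have := a_sign (sg i); rewrite /orthant_sign permK.
apply: (can_inj fK); rewrite gK mulmx_sum_eigenline yE.
by apply: eq_bigr => j _; rewrite permKV divfK.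
Qed.

Lemma image_sail s : f @` sail v s = sail w (orthant_sign s).
Proof.
rewrite (image_can_preimage _ fK gK) /sail -(bdry_preimage fK gK).
rewrite -(conv_hull_preimage fK gK); congr (bdry (conv_hull _)).
rewrite -[g @^-1` (_ `\` _)]/(g @^-1` (_ `&` _) `\` g @^-1` [set 0]).
rewrite preimage_setI preimage_closed_orthant (preimage_int_pts _ LL').
congr (_ `\` _); apply/seteqP; split=> x /=; last by move=> ->; rewrite mulmx0.
by move=> gx0; rewrite -[x]gK /= gx0 mulmx0.
Qed.

Lemma cf_equiv_cont_frac : cf_equiv (cont_frac v) (cont_frac w).
Proof.
exists (map_mx intr L); split.
  by rewrite (image_can_preimage _ fK gK) (preimage_int_pts _ LL').
apply/seteqP; split=> [_ [x [s vsx] <-] | y [s' wsy]].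
  by exists (orthant_sign s); rewrite -image_sail; exists x.
have [s sE] := orthant_sign_surj s'.
by move: wsy; rewrite -sE -image_sail => -[x vsx <-]; exists x => //; exists s.
Qed.

End EigenlineTransfer.

Lemma char_poly_trmx (R : comNzRingType) n (A : 'M[R]_n) :
  char_poly A^T = char_poly A.
Proof.
rewrite /char_poly -det_tr; congr (\det _).
by apply/matrixP => i j; rewrite !mxE eq_sym.
Qed.

Lemma root_char_poly_eigenvector (F : fieldType) n (A : 'M[F]_n) (x : 'cV[F]_n) a :
  x != 0 -> A *m x = a *: x -> root (char_poly A) a.
Proof.
move=> x_neq0 Ax; rewrite -char_poly_trmx -eigenvalue_root_char.
apply/eigenvalueP; exists x^T; last by rewrite trmx_eq0.
by rewrite -trmx_mul Ax linearZ.
Qed.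

Lemma eigenvalue_in_codom (F : fieldType) n (A : 'M[F]_n)
    (w : 'I_n -> 'cV[F]_n) (l : 'I_n -> F) (x : 'cV[F]_n) a :
  injective l -> (forall j, w j != 0 /\ A *m w j = l j *: w j) ->
  x != 0 -> A *m x = a *: x -> a \in codom l.
Proof.
move=> l_inj wE x_neq0 Ax; apply: contraT => a_notin.
(* otherwise a :: codom l lists n.+1 distinct roots of char_poly A *)
have := @max_poly_roots _ (char_poly A) (a :: codom l)
  (monic_neq0 (char_poly_monic A)).
rewrite size_char_poly /= size_codom card_ord ltnn; apply.
  rewrite /= (root_char_poly_eigenvector x_neq0 Ax) /=.
  apply/allP => _ /codomP[j ->]; have [wj_neq0 Awj] := wE j.
  exact: root_char_poly_eigenvector wj_neq0 Awj.
by rewrite /= a_notin; apply/injectiveP.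
Qed.

Lemma eigenbasis_scale_inj (R : realType) (A : 'M[R]_3) v l i i' a :
  eigenbasis A v l -> v i = a *: v i' -> i = i'.
Proof.
move=> [vE l_inj] vi; apply: l_inj.
have [vi_neq0 Avi] := vE i; have [_ Avi'] := vE i'.
have : (l i - l i') *: v i = 0.
  by rewrite scalerBl -Avi {1}vi -scalemxAr Avi' scalerA mulrC -scalerA -vi subrr.
by move/eqP; rewrite scaler_eq0 (negbTE vi_neq0) orbF subr_eq0 => /eqP.
Qed.

Lemma mulmx3E (R : pzRingType) n (A : 'M[R]_3) (B : 'M[R]_(3, n)) i j :
  (A *m B) i j = A i 0 * B 0 j + A i 1 * B 1 j + A i 2%:R * B 2%:R j.
Proof.
rewrite mxE !big_ord_recr big_ord0 /= add0r.
by congr (_ * _ + _ * _ + _ * _); congr (_ _ _); apply/val_inj.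
Qed.

Definition L_t (t : nat) : 'M[int]_3 :=
  \matrix_(i < 3, j < 3) nth 0 (nth [::]
    [:: [:: 1; t%:R + 2; - t%:R - 4]; [:: 0; - t%:R - 5; t%:R + 6]; [:: 0; 1; -1]] i) j.

Definition L_t_inv (t : nat) : 'M[int]_3 :=
  \matrix_(i < 3, j < 3) nth 0 (nth [::]
    [:: [:: 1; 2; t%:R + 8]; [:: 0; 1; t%:R + 6]; [:: 0; 1; t%:R + 5]] i) j.

Lemma L_t_mulmxV t : L_t t *m L_t_inv t = 1.
Proof.
apply/matrixP => i j; rewrite mulmx3E !mxE.
by case: i => [[|[|[|i]]] Hi] //; case: j => [[|[|[|j]]] Hj] //=; ring.
Qed.

Lemma L_t_mulVmx t : L_t_inv t *m L_t t = 1.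
Proof.
apply/matrixP => i j; rewrite mulmx3E !mxE.
by case: i => [[|[|[|i]]] Hi] //; case: j => [[|[|[|j]]] Hj] //=; ring.
Qed.

Lemma M_t_intertwines (R : realType) t :
  M_t R t *m map_mx intr (L_t t) =
  map_mx intr (L_t t) *m (A_t R t ^+ 2 + (t%:R + 3) *: A_t R t + 2%:M).
Proof.
rewrite expr2 -mulmxE; apply/matrixP => i j.
rewrite !mulmx3E !mxE !big_ord_recr !big_ord0 /= !mxE.
by case: i => [[|[|[|i]]] Hi] //; case: j => [[|[|[|j]]] Hj] //=; ring.
Qed.

Lemma M_t_eigenvectorE (R : realType) t (y : 'cV[R]_3) k :
  M_t R t *m y = k *: y ->
  y = y 2%:R 0 *: \col_i [:: k * (k - t%:R - 6) + t%:R + 5; k - t%:R - 6; 1]`_i.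
Proof.
move=> My; have e (i : 'I_3) := congr1 (fun m : 'cV[R]_3 => m i 0) My.
have := e 1; have := e 2%:R; rewrite /= !mulmx3E !mxE /= => e2 e1.
have y1E : y 1 0 = (k - t%:R - 6) * y 2%:R 0 by lra.
have y0E : y 0 0 = k * y 1 0 + (t%:R + 5) * y 2%:R 0 by lra.
apply/matrixP => i j; rewrite (ord1 j) !mxE.
case: i => [[|[|[|i]]] Hi] //=.
- by rewrite (_ : Ordinal Hi = 0) ?y0E ?y1E; [ring | apply/val_inj].
- by rewrite (_ : Ordinal Hi = 1) ?y1E; [ring | apply/val_inj].
- by rewrite (_ : Ordinal Hi = 2%:R) ?mulr1 //; apply/val_inj.
Qed.

Lemma M_t_eigenvectors_parallel (R : realType) t (y z : 'cV[R]_3) k :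
  M_t R t *m y = k *: y -> M_t R t *m z = k *: z -> z != 0 ->
  exists a, y = a *: z.
Proof.
move=> /M_t_eigenvectorE yE /M_t_eigenvectorE zE z_neq0.
move: (y 2%:R 0) (z 2%:R 0) yE zE => b b' -> zE.
have b'_neq0 : b' != 0 by apply: contraNneq z_neq0 => b'0; rewrite zE b'0 scale0r.
by exists (b / b'); rewrite zE scalerA divfK.
Qed.

Lemma A_t_eigenvector_image (R : realType) t (w : 'I_3 -> 'cV[R]_3) lw x l :
  eigenbasis (M_t R t) w lw -> x != 0 -> A_t R t *m x = l *: x ->
  exists j c, c != 0 /\ map_mx intr (L_t t) *m x = c *: w j.
Proof.
move=> [wE lw_inj] x_neq0 Ax; set y := map_mx intr (L_t t) *m x.
have y_neq0 : y != 0.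
  apply: contraNneq x_neq0 => y0.
  by rewrite -[x](intmx_mulmxK (L_t_mulVmx t)) -/y y0 mulmx0.
have My : M_t R t *m y = (l ^+ 2 + (t%:R + 3) * l + 2) *: y.
  rewrite /y mulmxA M_t_intertwines -mulmxA !mulmxDl -scalemxAl -mulmxA Ax.
  rewrite -scalemxAr Ax !scalerA mul_scalar_mx -!scalerDl -scalemxAr.
  by congr (_ *: _); ring.
have /codomP [j lj] := eigenvalue_in_codom lw_inj wE y_neq0 My.
have [wj_neq0 Mwj] := wE j; rewrite lj in My.
have [c yE] := M_t_eigenvectors_parallel My Mwj wj_neq0.
exists j, c; split => //.
by apply: contraNneq y_neq0 => c0; rewrite yE c0 scale0r.
Qed.

Theorem mainTheorem2 (R : realType) (t : nat)
  (v w : 'I_3 -> 'cV[R]_3) (lv lw : 'I_3 -> R) :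
  eigenbasis (A_t R t) v lv -> eigenbasis (M_t R t) w lw ->
  cf_equiv (cont_frac v) (cont_frac w).
Proof.
move=> vbasis wbasis; have [vE _] := vbasis.
have /fin_all_exists [sg /fin_all_exists [c Lv]] : forall i, exists j c,
    c != 0 /\ map_mx intr (L_t t) *m v i = c *: w j.
  move=> i; have [vi_neq0 Avi] := vE i.
  exact: A_t_eigenvector_image wbasis vi_neq0 Avi.
have sg_inj : injective sg.
  move=> i i' sgE; apply: (eigenbasis_scale_inj (a := c i / c i') vbasis).
  apply: (can_inj (intmx_mulmxK (L_t_mulVmx t))).
  by rewrite -scalemxAr (Lv i).2 (Lv i').2 sgE scalerA divfK //; case: (Lv i').
apply: (cf_equiv_cont_frac (L_t_mulmxV t) (L_t_mulVmx t) (sg := perm sg_inj) (c := c)).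
  by move=> i; case: (Lv i).
by move=> i; rewrite permE; case: (Lv i).
Qed.
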